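(* For every positive integer $n$, as an identity of rational functions in $x$, $$\sum_{k=1}^n\binom{x}{k}\binom{-x}{k}H_k^{(2)}=-\frac{1}{x^2}+\binom{x-1}{n}\binom{-x-1}{n}\left(\frac{1}{x^2}+H_n^{(2)}\right).$$
   Context: $\binom{x}{k}=x(x-1)\cdots(x-k+1)/k!$ for an indeterminate $x$ and integer $k\ge0$. $H_n^{(2)}=\sum_{j=1}^n j^{-2}$. *)

From mathcomp Require Import all_boot all_order all_algebra.
From mathcomp Require Import fraction.
Set Implicit Arguments. Unset Strict Implicit. Unset Printing Implicit Defensive.
Import Order.TTheory GRing.Theory Num.Theory.
Local Open Scope ring_scope.

Definition gbinom (F : fieldType) (x : F) (k : nat) : F :=
  (\prod_(i < k) (x - i%:R)) / (k`!)%:R.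

Definition H2 (F : fieldType) (n : nat) : F :=
  \sum_(1 <= j < n.+1) ((j%:R) ^+ 2)^-1.

Definition ratfun := {fraction {poly rat}}.
Definition xF : ratfun := tofrac 'X.

From mathcomp Require Import all_boot all_order all_algebra.
From mathcomp Require Import fraction ring.
Import GRing.Theory.
Local Open Scope ring_scope.

(* With [P n := binom(x-1,n) binom(-x-1,n)], absorption gives
   [binom(x,n+1) binom(-x,n+1) = -x^2 P n / (n+1)^2] and
   [P (n+1) = P n ((n+1)^2 - x^2) / (n+1)^2]. Feeding both into the induction
   step on [n] reduces it to a rational identity in [x] and [n], since
   [H2 (n+1) = H2 n + 1/(n+1)^2]. *)

Section GeneralizedBinomial.
Variable F : fieldType.
Hypothesis natrS_neq0 : forall k : nat, k.+1%:R != 0 :> F.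

Lemma natr_fact_neq0 n : (n`!)%:R != 0 :> F.
Proof. by case: n`! (fact_gt0 n). Qed.

Lemma gbinom0 (y : F) : gbinom y 0 = 1.
Proof. by rewrite /gbinom big_ord0 divr1. Qed.

Lemma gbinomSr (y : F) n : gbinom y n.+1 = gbinom y n * (y - n%:R) / n.+1%:R.
Proof.
rewrite /gbinom big_ord_recr /= factS natrM.
by field; rewrite [1 + _]addrC natr1 natrS_neq0 natr_fact_neq0.
Qed.

Lemma gbinom_absorb (y : F) n : gbinom y n.+1 = y * gbinom (y - 1) n / n.+1%:R.
Proof.
rewrite /gbinom big_ord_recl /= factS natrM subr0.
have -> : \prod_(i < n) (y - (bump 0 i)%:R) = \prod_(i < n) (y - 1 - i%:R).
  by apply: eq_bigr => i _; rewrite /bump add1n -addn1 natrD opprD addrA addrAC.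
by field; rewrite [1 + _]addrC natr1 natrS_neq0 natr_fact_neq0.
Qed.

Lemma gbinom_oppS (x : F) n :
  gbinom x n.+1 * gbinom (- x) n.+1
  = - x ^+ 2 * (gbinom (x - 1) n * gbinom (- x - 1) n) / n.+1%:R ^+ 2.
Proof. by rewrite !gbinom_absorb; field; rewrite addrC natr1 natrS_neq0. Qed.

Lemma gbinom_pred_oppS (x : F) n :
  gbinom (x - 1) n.+1 * gbinom (- x - 1) n.+1
  = gbinom (x - 1) n * gbinom (- x - 1) n * (n.+1%:R ^+ 2 - x ^+ 2)
    / n.+1%:R ^+ 2.
Proof. by rewrite !gbinomSr -addn1 natrD; field; rewrite natr1 natrS_neq0. Qed.

Lemma H2S n : H2 F n.+1 = H2 F n + (n.+1%:R ^+ 2)^-1.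
Proof. by rewrite /H2 big_nat_recr. Qed.

Lemma sum_gbinom_opp_H2 (x : F) n : x != 0 ->
  \sum_(1 <= k < n.+1) gbinom x k * gbinom (- x) k * H2 F k
  = - (x ^+ 2)^-1
    + gbinom (x - 1) n * gbinom (- x - 1) n * ((x ^+ 2)^-1 + H2 F n).
Proof.
move=> x_neq0; elim: n => [|n IH].
  by rewrite big_geq // !gbinom0 /H2 big_geq //; field.
rewrite big_nat_recr //= IH gbinom_oppS gbinom_pred_oppS H2S.
by field; rewrite addrC natr1 natrS_neq0.
Qed.

End GeneralizedBinomial.

Lemma ratfun_natrS_neq0 k : k.+1%:R != 0 :> ratfun.
Proof.
have -> : k.+1%:R = tofrac (k.+1%:R : {poly rat}) by rewrite rmorph_nat.
by rewrite tofrac_eq0 -polyC_natr polyC_eq0 Num.Theory.pnatr_eq0.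
Qed.

Theorem lemma2p1 (n : nat) (hn : (0 < n)%N) :
  \sum_(1 <= k < n.+1) gbinom xF k * gbinom (- xF) k * H2 ratfun k
  = - (xF ^+ 2)^-1
    + gbinom (xF - 1) n * gbinom (- xF - 1) n * ((xF ^+ 2)^-1 + H2 ratfun n).
Proof.
apply: sum_gbinom_opp_H2; first exact: ratfun_natrS_neq0.
by rewrite /xF tofrac_eq0 polyX_eq0.
Qed.
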